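(* For any integer $p\ge2$ and any partition $\lambda$ with $p$-core $\bar\lambda$, the ratio $H_{\text{non-}p\text{-fold}}(\lambda)/H(\bar\lambda)$ is an integer.
   Context: For a partition $\lambda$, the hook length of a box of its Young diagram is the number of boxes to its right in its row plus the number below it in its column plus one; $H(\lambda)$ is the product of all hook lengths and $H_{\text{non-}p\text{-fold}}(\lambda)$ the product of the hook lengths not divisible by $p$. A border strip of size $p$ is a connected skew Young diagram with $p$ boxes containing no $2\times2$ square; the $p$-core $\bar\lambda$ is the partition obtained from $\lambda$ by repeatedly removing border strips of size $p$ (keeping a Young diagram after each removal) until no removal is possible; it is independent of the choices. *)

From Stdlib Require Import Relations.
From mathcomp Require Import all_boot.
Set Implicit Arguments. Unset Strict Implicit. Unset Printing Implicit Defensive.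

Definition is_partition (la : seq nat) : bool :=
  sorted geq la && all (fun x => 0 < x) la.

(* Part i (0-indexed), 0 beyond the length. *)
Definition part (la : seq nat) (i : nat) : nat := nth 0 la i.

(* Conjugate part: length of column j (0-indexed). *)
Definition conj_part (la : seq nat) (j : nat) : nat := count (fun x => j < x) la.

(* Box (i,j) (row i, column j, 0-indexed) of the Young diagram. *)
Definition in_diagram (la : seq nat) (c : nat * nat) : bool :=
  c.2 < part la c.1.

(* Hook length of box (i,j): arm + leg + 1. *)
Definition hook (la : seq nat) (i j : nat) : nat :=
  (part la i - j.+1) + (conj_part la j - i.+1) + 1.

Definition Hprod (la : seq nat) : nat :=
  \prod_(i < size la) \prod_(j < part la i) hook la i j.

Definition Hnonp (p : nat) (la : seq nat) : nat :=
  \prod_(i < size la) \prod_(j < part la i | ~~ (p %| hook la i j)) hook la i j.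

Definition in_skew (la mu : seq nat) (c : nat * nat) : bool :=
  in_diagram la c && ~~ in_diagram mu c.

Definition adjacent (a b : nat * nat) : Prop :=
  (a.1 = b.1 /\ (a.2.+1 = b.2 \/ b.2.+1 = a.2)) \/
  (a.2 = b.2 /\ (a.1.+1 = b.1 \/ b.1.+1 = a.1)).

Definition connected_cells (S : nat * nat -> bool) : Prop :=
  forall a b, S a -> S b ->
    clos_refl_trans (nat * nat) (fun x y => S x /\ S y /\ adjacent x y) a b.

Definition no_2x2 (S : nat * nat -> bool) : Prop :=
  forall i j, ~ (S (i, j) /\ S (i.+1, j) /\ S (i, j.+1) /\ S (i.+1, j.+1)).

Definition border_strip (p : nat) (la mu : seq nat) : Prop :=
  (forall i, part mu i <= part la i) /\
  \sum_(i < size la) (part la i - part mu i) = p /\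
  connected_cells (in_skew la mu) /\
  no_2x2 (in_skew la mu).

Definition remove_strip (p : nat) (la mu : seq nat) : Prop :=
  is_partition mu /\ border_strip p la mu.

Definition is_pcore (p : nat) (la c : seq nat) : Prop :=
  clos_refl_trans (seq nat) (remove_strip p) la c /\
  ~ (exists mu, remove_strip p c mu).

(* Pad [la] with zero parts to [N] rows and encode it by its beta-set
   B = { la_r + N - 1 - r : r < N }.  The hooks of length h of [la] correspond
   to the pairs (x, x - h) with x in B and x - h a gap of B.  Removing a border
   strip of size p replaces one element x of B by x - p, so it preserves the
   residues of B modulo p; since every hook of length p is the length of a
   removable border strip, the beta-set of the p-core is closed under
   x |-> x - p.  Hence the core has no hook of length divisible by p, and for
   h not divisible by p a count in each residue class shows that the core has
   at most as many hooks of length h as [la].  So the multiset of hook lengths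
   of the core is contained in that of the hooks of [la] prime to p. *)

From Stdlib Require Import Relations.
From mathcomp Require Import all_boot zify.
Set Implicit Arguments. Unset Strict Implicit. Unset Printing Implicit Defensive.
Arguments part : simpl never.

Lemma geq_trans : transitive geq.
Proof. by move=> n m p le_nm le_pn; apply: leq_trans le_pn le_nm. Qed.

Lemma part_default la r : size la <= r -> part la r = 0.
Proof. exact: nth_default. Qed.

Lemma conj_part_le_size la j : conj_part la j <= size la.
Proof. exact: count_size. Qed.

Lemma conj_part_nonincreasing la : {homo conj_part la : j j' /~ j <= j'}.
Proof. by move=> j' j le_jj'; apply: sub_count => x /= /(leq_ltn_trans le_jj'). Qed.

Section Partition.
Variable la : seq nat.
Hypothesis la_part : is_partition la.

Lemma part_gt0 r : r < size la -> 0 < part la r.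
Proof. by move=> lt_rla; case/andP: la_part => _ /allP; apply; apply: mem_nth. Qed.

Lemma part_nonincreasing : {homo part la : r r' /~ r <= r'}.
Proof.
move=> r' r le_rr'; case: (ltnP r' (size la)) => [lt_r'la|]; last first.
  by move/part_default->.
case/andP: la_part => sorted_la _.
apply: (sorted_leq_nth geq_trans leqnn) => //.
by rewrite inE (leq_ltn_trans le_rr').
Qed.

Lemma conj_partP i j : (i < conj_part la j) = (j < part la i).
Proof.
move: la_part i; rewrite /conj_part /part /is_partition.
elim: la => [|x s IHs] /=; first by move=> _ i; rewrite nth_nil.
case/andP=> /[dup] path_xs /path_sorted sorted_s /andP[x_gt0 s_gt0] i.
have s_le_x : all (geq x) s.
  exact: order_path_min geq_trans path_xs.
have {}IHs := IHs (introT andP (conj sorted_s s_gt0)).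
case: (ltnP j x) => [lt_jx|le_xj]; first by case: i => [|i] //=; rewrite add1n ltnS.
have -> : count (fun y => j < y) s = 0.
  apply/eqP; rewrite -leqn0 leqNgt -has_count; apply/hasPn => y /(allP s_le_x).
  by move=> /= le_yx; rewrite -leqNgt (leq_trans le_yx).
case: i => [|i] /=; first by rewrite [j < x]ltnNge le_xj.
case: (ltnP i (size s)) => [lt_is|]; last by move/(nth_default 0)->.
have /(allP s_le_x) /= := mem_nth 0 lt_is.
by move=> le_x; apply/esym/negbTE; rewrite -leqNgt (leq_trans le_x).
Qed.

End Partition.

Definition beta N la r := part la r + (N - r.+1).
Definition beta_set N la := [seq beta N la r | r <- iota 0 N].
Definition col_gap N la j := j + (N - conj_part la j).
Definition row_gaps N la i :=
  [seq g <- iota 0 (beta N la i) | g \notin beta_set N la].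
Definition hook_row la i := [seq hook la i j | j <- iota 0 (part la i)].
Definition hook_seq N la := flatten [seq hook_row la i | i <- iota 0 N].
Definition hook_count (B : seq nat) h :=
  count (fun x => (h <= x) && (x - h \notin B)) B.

Lemma count_mem_iota (s : seq nat) n : uniq s ->
  count (mem s) (iota 0 n) = count (gtn n) s.
Proof.
move=> uniq_s; rewrite -!size_filter; apply/perm_size/uniq_perm.
- exact/filter_uniq/iota_uniq.
- exact: filter_uniq.
by move=> y; rewrite !mem_filter mem_iota andbC.
Qed.

Lemma count_gtn_iota i n : count (leq i.+1) (iota 0 n) = n - i.+1.
Proof. by elim: n => [|n IHn] //; rewrite -[n.+1]addn1 iotaD count_cat IHn /=; lia. Qed.

Lemma notin0_hook_seq N la : 0 \notin hook_seq N la.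
Proof.
by apply/flattenP => -[_ /mapP[i _ ->]] /mapP[j _]; rewrite /hook addn1.
Qed.

Lemma prod_hook_seq N la (P : pred nat) : size la <= N ->
  \prod_(i < size la) \prod_(j < part la i | P (hook la i j)) hook la i j =
  \prod_(x <- hook_seq N la | P x) x.
Proof.
move=> le_laN; rewrite /hook_seq big_flatten /= big_map -(subnKC le_laN) iotaD.
rewrite big_cat /= [X in _ * X]big1_seq ?muln1 => [|i /andP[_]]; last first.
  by rewrite mem_iota => /andP[/part_default le_i _]; rewrite /hook_row le_i big_nil.
have iota0E n : iota 0 n = index_iota 0 n by rewrite /index_iota subn0.
rewrite iota0E big_mkord; apply: eq_bigr => i _.
by rewrite big_map iota0E big_mkord.
Qed.

Section BetaSet.
Variables (la : seq nat) (N : nat).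
Hypotheses (la_part : is_partition la) (le_laN : size la <= N).

Local Notation bt := (beta N la).
Local Notation B := (beta_set N la).

Lemma ltn_beta r r' : r < N -> r' < N -> (bt r' < bt r) = (r < r').
Proof.
move=> ltrN ltr'N; rewrite /beta.
case: (ltnP r r') => [lt_rr'|le_r'r].
- by have := part_nonincreasing la_part (ltnW lt_rr'); lia.
- by have := part_nonincreasing la_part le_r'r; lia.
Qed.

Lemma uniq_beta_set : uniq B.
Proof.
rewrite map_inj_in_uniq ?iota_uniq // => r r'; rewrite !mem_iota /= => ltrN ltr'N eq_bt.
apply/eqP; rewrite eqn_leq leqNgt [r' <= r]leqNgt.
by rewrite -(ltn_beta ltr'N ltrN) -(ltn_beta ltrN ltr'N) eq_bt ltnn.
Qed.

Lemma col_gap_notin_beta_set j : col_gap N la j \notin B.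
Proof.
apply/mapP=> -[r]; rewrite mem_iota /= /beta /col_gap => ltrN.
have := conj_part_le_size la j; have := conj_partP la_part r j.
case: (ltnP r (conj_part la j)) => ? /esym; last move/negbT; rewrite -?leqNgt; lia.
Qed.

Lemma hook_add_col_gap i j : j < part la i -> hook la i j + col_gap N la j = bt i.
Proof.
move=> lt_ji; have := lt_ji; rewrite -conj_partP // /hook /beta /col_gap.
by have := conj_part_le_size la j; lia.
Qed.

Lemma col_gap_inj : injective (col_gap N la).
Proof.
apply/incn_inj/leq_mono/(homo_ltn ltn_trans) => j; rewrite /col_gap.
have := conj_part_nonincreasing la (leqnSn j); have := conj_part_le_size la j; lia.
Qed.

Lemma size_row_gaps i : i < N -> size (row_gaps N la i) = part la i.
Proof.
move=> ltiN; rewrite size_filter.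
have count_beta : count (mem B) (iota 0 (bt i)) = N - i.+1.
  rewrite count_mem_iota ?uniq_beta_set // /beta_set count_map -count_gtn_iota.
  by apply: eq_in_count => r; rewrite mem_iota /= => ltrN; apply: ltn_beta.
apply/eqP; rewrite -(eqn_add2l (N - i.+1)) -{1}count_beta count_predC size_iota.
by rewrite /beta; apply/eqP; lia.
Qed.

Lemma perm_row_gaps i : i < N ->
  perm_eq [seq col_gap N la j | j <- iota 0 (part la i)] (row_gaps N la i).
Proof.
move=> ltiN.
have uniq_gaps : uniq [seq col_gap N la j | j <- iota 0 (part la i)].
  by rewrite map_inj_uniq ?iota_uniq //; apply: col_gap_inj.
have sub_gaps : {subset [seq col_gap N la j | j <- iota 0 (part la i)] <= row_gaps N la i}.
  move=> g /mapP[j]; rewrite mem_iota /= => lt_ji ->.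
  rewrite mem_filter col_gap_notin_beta_set mem_iota /= -(hook_add_col_gap lt_ji).
  by rewrite /hook; lia.
have [|_ eq_gaps] := uniq_min_size uniq_gaps sub_gaps.
  by rewrite size_row_gaps // size_map size_iota.
by apply: uniq_perm => //; apply/filter_uniq/iota_uniq.
Qed.

Lemma perm_hook_row i : i < N ->
  perm_eq (hook_row la i) [seq bt i - g | g <- row_gaps N la i].
Proof.
move=> ltiN; suff -> : hook_row la i =
    [seq bt i - g | g <- [seq col_gap N la j | j <- iota 0 (part la i)]].
  exact/perm_map/perm_row_gaps.
rewrite -map_comp; apply/eq_in_map => j; rewrite mem_iota /= => /hook_add_col_gap <-.
by rewrite addnK.
Qed.

Lemma count_hook_row i h : i < N -> 0 < h ->
  count_mem h (hook_row la i) = (h <= bt i) && (bt i - h \notin B).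
Proof.
move=> ltiN h_gt0; rewrite (permP (perm_hook_row ltiN)) count_map.
rewrite (eq_in_count (a2 := fun g => (h <= bt i) && (g == bt i - h))); last first.
  by move=> g; rewrite mem_filter mem_iota /= => /andP[_ lt_g]; lia.
case: leqP => [le_h|_]; last by rewrite count_pred0.
rewrite count_uniq_mem ?filter_uniq ?iota_uniq // mem_filter mem_iota /=.
by rewrite [_ < _](_ : _ = true) ?andbT //; lia.
Qed.

Lemma count_hook_seq h : 0 < h -> count_mem h (hook_seq N la) = hook_count B h.
Proof.
move=> h_gt0; rewrite count_flatten -map_comp /hook_count /beta_set count_map.
rewrite -sumn_count; congr sumn; apply/eq_in_map => i; rewrite mem_iota /= => ltiN.
exact: count_hook_row.
Qed.

End BetaSet.

Lemma clos_rt_sym (T : Type) (R : relation T) :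
  (forall x y, R x y -> R y x) ->
  forall x y, clos_refl_trans T R x y -> clos_refl_trans T R y x.
Proof.
move=> R_sym x y; elim=> [a b Rab | a | a b c _ IHab _ IHbc].
- exact/rt_step/R_sym.
- exact: rt_refl.
- exact: rt_trans IHbc IHab.
Qed.

Lemma cells_path_cross_row (S : nat * nat -> bool) a b r :
  clos_refl_trans _ (fun x y => S x /\ S y /\ adjacent x y) a b ->
  a.1 <= r < b.1 -> exists c, S (r, c) /\ S (r.+1, c).
Proof.
elim: a b / => [[x1 x2] [y1 y2] [Sx [Sy adj_xy]] | x | x y z _ IHxy _ IHyz] /=.
- case: adj_xy => /= -[eq_xy eq_c] lt_r; first lia.
  have [? ?] : x1 = r /\ y1 = r.+1 by lia.
  by subst; exists y2.
- lia.
- case: (leqP y.1 r) => [le_yr lt_r | lt_ry /andP[le_xr _]].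
    by apply: IHyz; lia.
  by apply: IHxy; lia.
Qed.

Lemma sum_rim_rows (lam mu : nat -> nat) i k :
  (forall r, mu r <= lam r) -> (forall r, i <= r < k -> (mu r).+1 = lam r.+1) ->
  i <= k -> \sum_(i <= r < k.+1) (lam r - mu r) + mu k = lam i + (k - i).
Proof.
move=> le_mu_lam; elim: k => [|k IHk] mu_in le_ik.
  have -> : i = 0 by lia.
  by rewrite big_nat1 subnK ?addn0.
case: (ltnP k i) => [lt_ki|le_ik'].
  have -> : i = k.+1 by lia.
  by rewrite big_nat1 subnK ?subnn ?addn0.
rewrite big_nat_recr /=; last lia.
rewrite -addnA subnK // -(mu_in k) 1?addnS ?IHk //; last lia.
- by rewrite -addnS -subSn.
- by move=> r lt_r; apply: mu_in; lia.
Qed.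

Lemma sum_rim (lam mu : nat -> nat) i k n :
  (forall r, mu r <= lam r) -> (forall r, r < i \/ k < r -> mu r = lam r) ->
  (forall r, i <= r < k -> (mu r).+1 = lam r.+1) ->
  i <= k < n -> \sum_(r < n) (lam r - mu r) + mu k = lam i + (k - i).
Proof.
move=> le_mu_lam mu_out mu_in /andP[le_ik lt_kn].
rewrite -(sum_rim_rows le_mu_lam mu_in le_ik) -(big_mkord xpredT (fun r => lam r - mu r)).
rewrite (@big_cat_nat _ _ _ i) //; last lia.
rewrite (@big_cat_nat _ _ _ k.+1 i n) //; last lia.
have sum_eq0 a b : (forall r, a <= r < b -> mu r = lam r) ->
    \sum_(a <= r < b) (lam r - mu r) = 0.
  by move=> eq_ab; rewrite big_nat big1 // => r /eq_ab ->; rewrite subnn.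
rewrite (sum_eq0 0) ?(sum_eq0 k.+1) /= ?add0n ?addn0 // => r lt_r; apply: mu_out; lia.
Qed.

Lemma border_strip_row_step la mu r c : is_partition la -> is_partition mu ->
  no_2x2 (in_skew la mu) -> in_skew la mu (r, c) -> in_skew la mu (r.+1, c) ->
  (part mu r).+1 = part la r.+1.
Proof.
move=> la_part mu_part no_sq; rewrite /in_skew /in_diagram /= -!leqNgt.
move=> /andP[lt_c_la le_mu_c] /andP[lt_c_la' le_mu'_c].
have := part_nonincreasing la_part (leqnSn r); have := part_nonincreasing mu_part (leqnSn r).
case: (ltnP (part mu r).+1 (part la r.+1)) => [lt_mu_la mu_step la_step | ]; last lia.
case: (no_sq r (part mu r)); rewrite /in_skew /in_diagram /= -!leqNgt.
by split; [|split; [|split]]; apply/andP; split; lia.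
Qed.

Lemma border_strip_shape p la mu : 0 < p -> is_partition la -> is_partition mu ->
  border_strip p la mu ->
  exists i k, [/\ i <= k < size la,
    forall r, r < i \/ k < r -> part mu r = part la r,
    forall r, i <= r < k -> (part mu r).+1 = part la r.+1 &
    part mu k + p = part la i + (k - i)].
Proof.
move=> p_gt0 la_part mu_part [le_mu [sum_p [conn no_sq]]].
have ex_row : exists r, part mu r < part la r.
  case: (boolP [exists r : 'I_(size la), part mu r < part la r]) => [/existsP[r lt_r]|].
    by exists r.
  move/existsPn => eq_rows; move: sum_p; rewrite big1 => [|r _]; first lia.
  by have := eq_rows r; have := le_mu r; lia.
have row_lt_size r : part mu r < part la r -> r < size la.
  by case: (ltnP r (size la)) => // /part_default->.
have row_bound r : part mu r < part la r -> r <= (size la).-1.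
  by move/row_lt_size; lia.
have [i lt_i i_min] := ex_minnP ex_row.
have [k lt_k k_max] := ex_maxnP ex_row row_bound.
have le_ik : i <= k by apply: k_max.
have mu_out r : r < i \/ k < r -> part mu r = part la r.
  move=> r_out; case: (ltnP (part mu r) (part la r)) => [/[dup] /i_min + /k_max|]; first lia.
  by have := le_mu r; lia.
have skew_end s : part mu s < part la s -> in_skew la mu (s, part mu s).
  by rewrite /in_skew /in_diagram /= ltnn andbT.
have mu_in r : i <= r < k -> (part mu r).+1 = part la r.+1.
  move=> r_in; have [c [skew_r skew_r']] :=
    cells_path_cross_row (conn _ _ (skew_end i lt_i) (skew_end k lt_k)) r_in.
  exact: border_strip_row_step skew_r skew_r'.
have lt_k_la := row_lt_size k lt_k.
exists i, k; split => //; first by rewrite le_ik.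
by have := sum_rim le_mu mu_out mu_in (n := size la); rewrite le_ik lt_k_la sum_p; lia.
Qed.

Lemma partition_of_parts (f : nat -> nat) n :
  (forall r, f r.+1 <= f r) -> f n = 0 -> exists2 mu, is_partition mu & part mu =1 f.
Proof.
elim: n f => [|n IHn] f f_step f_n; case: (posnP (f 0)) => [f0_eq0|f0_gt0].
1,3: exists [::] => // r; rewrite /part nth_nil; apply/esym/eqP; rewrite -leqn0 -f0_eq0.
1,2: exact (homo_leq (r := fun a b => b <= a) leqnn geq_trans f_step (leq0n r)).
  by rewrite f_n in f0_gt0.
have [mu mu_part part_mu] := IHn (f \o succn) (fun r => f_step r.+1) f_n.
exists (f 0 :: mu) => [|[|r] //]; last exact: part_mu.
move: mu_part; rewrite /is_partition /= f0_gt0 => /andP[sorted_mu ->]; rewrite andbT.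
case: mu sorted_mu part_mu => [|y s] //= -> part_mu.
by move: (part_mu 0); rewrite /part /= => ->; rewrite f_step.
Qed.

Lemma adjacent_sym a b : adjacent a b -> adjacent b a.
Proof. by rewrite /adjacent; lia. Qed.

Section RimHookRemoval.
Variables (la : seq nat) (i k m : nat).
Hypotheses (la_part : is_partition la) (le_ik : i <= k).
Hypotheses (le_m : part la k.+1 <= m) (lt_m : m < part la k).

(* Row lengths of [la] after removing the rim hook that occupies rows [i..k]
   and ends at column [m] of row [k]. *)
Definition rim_removed r :=
  if r < i then part la r else if r < k then (part la r.+1).-1
  else if r == k then m else part la r.

Let la_step r : part la r.+1 <= part la r.
Proof. exact: part_nonincreasing. Qed.

Lemma rim_removed_out r : r < i \/ k < r -> rim_removed r = part la r.
Proof. by rewrite /rim_removed; repeat case: ifP => ?; lia. Qed.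

Lemma rim_removed_in r : i <= r < k -> (rim_removed r).+1 = part la r.+1.
Proof.
move=> r_in; have : part la k <= part la r.+1.
  by apply: part_nonincreasing; case/andP: r_in.
by rewrite /rim_removed; repeat case: ifP => ?; lia.
Qed.

Lemma rim_removed_last : rim_removed k = m.
Proof. by rewrite /rim_removed ltnn eqxx; case: ifP => ?; lia. Qed.

Lemma rim_removed_le r : rim_removed r <= part la r.
Proof.
have := la_step r; case: (eqVneq r k) => [->|ne_rk].
all: by rewrite /rim_removed; repeat case: ifP => ?; lia.
Qed.

Lemma rim_removed_step r : rim_removed r.+1 <= rim_removed r.
Proof.
have := la_step r; have := la_step r.+1; move: lt_m le_m.
rewrite /rim_removed; case: (eqVneq r k) => [->|ne_rk].
  by repeat case: ifP => ?; lia.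
case: (eqVneq r.+1 k) => [<-|ne_r1k]; by repeat case: ifP => ?; lia.
Qed.

Let lt_k_size : k < size la.
Proof. by case: (ltnP k (size la)) lt_m => // /part_default->. Qed.

Lemma rim_removed_size : rim_removed (size la) = 0.
Proof. by rewrite rim_removed_out ?part_default //; right. Qed.

Variable mu : seq nat.
Hypothesis part_mu : part mu =1 rim_removed.

Local Notation skew := (in_skew la mu).
Local Notation rim_step := (fun x y => skew x /\ skew y /\ adjacent x y).

Lemma in_skew_rim r c : skew (r, c) = (rim_removed r <= c < part la r).
Proof. by rewrite /in_skew /in_diagram /= part_mu -leqNgt andbC. Qed.

Lemma in_skew_rim_rows r c : skew (r, c) -> i <= r <= k.
Proof.
rewrite in_skew_rim; case: (ltnP r i) => [lt_ri|le_ir]; first by rewrite rim_removed_out; lia.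
by case: (ltnP k r) => // lt_kr; rewrite rim_removed_out; lia.
Qed.

Lemma rim_path_row_start r c : skew (r, c) ->
  clos_refl_trans _ rim_step (r, c) (r, rim_removed r).
Proof.
elim: c => [|c IHc] skew_rc.
  suff -> : rim_removed r = 0 by apply: rt_refl.
  by move: skew_rc; rewrite in_skew_rim; lia.
case: (eqVneq (rim_removed r) c.+1) => [->|ne_c]; first exact: rt_refl.
have skew_rc' : skew (r, c).
  by move: skew_rc; rewrite !in_skew_rim; lia.
apply: rt_trans (IHc skew_rc'); apply: rt_step; do !split => //.
by left; split => //; right.
Qed.

Lemma rim_path_last r c : skew (r, c) -> clos_refl_trans _ rim_step (r, c) (k, m).
Proof.
move dE: (k - r) => d; elim: d r c dE => [|d IHd] r c dE skew_rc.
  have r_k : r = k.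
    by have := in_skew_rim_rows skew_rc; lia.
  by rewrite -rim_removed_last -r_k; apply: rim_path_row_start.
have r_in : i <= r < k.
  by have := in_skew_rim_rows skew_rc; lia.
have f_r := rim_removed_in r_in; have la_r := la_step r.
have skew_r : skew (r, rim_removed r).
  by rewrite in_skew_rim leqnn /=; lia.
have skew_down : skew (r.+1, rim_removed r).
  by rewrite in_skew_rim rim_removed_step /=; lia.
apply: rt_trans (rim_path_row_start skew_rc) _.
apply: rt_trans (IHd _ _ _ skew_down); last lia.
by apply: rt_step; do !split => //; right; split => //; left.
Qed.

Lemma rim_connected : connected_cells skew.
Proof.
move=> [r c] [r' c'] skew_rc skew_rc'.
apply: rt_trans (rim_path_last skew_rc) (clos_rt_sym _ (rim_path_last skew_rc')).
by move=> x y [skew_x [skew_y /adjacent_sym]].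
Qed.

Lemma rim_no_2x2 : no_2x2 skew.
Proof.
move=> r c [skew_rc [_ [_ skew_rc']]].
have := in_skew_rim_rows skew_rc; have := in_skew_rim_rows skew_rc'.
move: skew_rc skew_rc'; rewrite !in_skew_rim => /andP[le_f_c _] /andP[_ lt_c_la] r_in r'_in.
by have := rim_removed_in (_ : i <= r < k); lia.
Qed.

Lemma rim_border_strip : border_strip (part la i + (k - i) - m) la mu.
Proof.
have le_mu r : part mu r <= part la r by rewrite part_mu rim_removed_le.
have mu_out r : r < i \/ k < r -> part mu r = part la r.
  by rewrite part_mu; apply: rim_removed_out.
have mu_in r : i <= r < k -> (part mu r).+1 = part la r.+1.
  by rewrite part_mu; apply: rim_removed_in.
split=> //; split; last by split; [apply: rim_connected | apply: rim_no_2x2].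
have := sum_rim le_mu mu_out mu_in (n := size la).
by rewrite le_ik lt_k_size part_mu rim_removed_last => /(_ isT); lia.
Qed.

End RimHookRemoval.

Lemma exists_remove_strip_hook la i j : is_partition la -> j < part la i ->
  exists mu, remove_strip (hook la i j) la mu.
Proof.
move=> la_part lt_ji; have lt_i_conj := lt_ji; rewrite -conj_partP // in lt_i_conj.
(* The rim hook of box (i, j) ends in the last row [k] of column [j]. *)
set k := (conj_part la j).-1.
have le_ik : i <= k by lia.
have le_m : part la k.+1 <= j.
  by rewrite leqNgt -conj_partP // /k prednK ?ltnn //; lia.
have lt_m : j < part la k by rewrite -conj_partP // /k; lia.
have [mu mu_part part_mu] :=
  partition_of_parts (rim_removed_step la_part le_ik le_m lt_m)
                     (rim_removed_size la_part le_ik le_m lt_m).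
exists mu; split=> //.
have -> : hook la i j = part la i + (k - i) - j by rewrite /hook /k; lia.
exact (rim_border_strip la_part le_ik le_m lt_m part_mu).
Qed.

Lemma remove_strip_size p la mu : remove_strip p la mu -> size mu <= size la.
Proof.
move=> [mu_part [le_mu _]]; case: (leqP (size mu) (size la)) => // lt_la_mu.
have := le_mu (size la); rewrite (part_default (leqnn _)) leqn0 => /eqP.
by have := part_gt0 mu_part lt_la_mu; lia.
Qed.

Lemma beta_set_remove_strip p N la mu : 0 < p -> is_partition la -> size la <= N ->
  remove_strip p la mu -> exists y, perm_eq (y + p :: beta_set N mu) (y :: beta_set N la).
Proof.
move=> p_gt0 la_part le_laN [mu_part strip].
have [i [k [/andP[le_ik lt_k_la] mu_out mu_in mu_k]]] :=
  border_strip_shape p_gt0 la_part mu_part strip.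
exists (beta N mu k).
have iota_la : iota 0 N = iota 0 i ++ [:: i] ++ iota i.+1 (k - i) ++ iota k.+1 (N - k.+1).
  rewrite {1}(_ : N = i + ((k - i).+1 + (N - k.+1))); last lia.
  by rewrite !iotaD add0n (_ : i + (k - i).+1 = k.+1) //; lia.
have iota_mu : iota 0 N = iota 0 i ++ iota i (k - i) ++ [:: k] ++ iota k.+1 (N - k.+1).
  rewrite {1}(_ : N = i + ((k - i) + (N - k.+1).+1)); last lia.
  by rewrite !iotaD add0n (_ : i + (k - i) = k) //; lia.
have map_low : [seq beta N mu r | r <- iota 0 i] = [seq beta N la r | r <- iota 0 i].
  by apply/eq_in_map => r; rewrite mem_iota /beta => lt_ri; rewrite mu_out //; left.
have map_high : [seq beta N mu r | r <- iota k.+1 (N - k.+1)] =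
                [seq beta N la r | r <- iota k.+1 (N - k.+1)].
  by apply/eq_in_map => r; rewrite mem_iota /beta => lt_kr; rewrite mu_out //; right; lia.
have map_mid : [seq beta N mu r | r <- iota i (k - i)] =
               [seq beta N la r | r <- iota i.+1 (k - i)].
  rewrite -[i.+1]add1n iotaDl -map_comp; apply/eq_in_map => r; rewrite mem_iota /= => r_in.
  by have := mu_in r (_ : i <= r < k); rewrite add1n /beta; lia.
have beta_k : beta N mu k + p = beta N la i by rewrite /beta; lia.
rewrite /beta_set {1}iota_mu iota_la !map_cat map_low map_mid map_high beta_k.
by apply/permP => P /=; rewrite !count_cat /= count_cat; lia.
Qed.

Lemma remove_strips_residues p N la mu : 0 < p ->
  clos_refl_trans _ (remove_strip p) la mu -> is_partition la -> size la <= N ->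
  [/\ is_partition mu, size mu <= N &
      perm_eq [seq x %% p | x <- beta_set N la] [seq x %% p | x <- beta_set N mu]].
Proof.
move=> p_gt0; elim=> [a b rem_ab | a | a b c _ IHab _ IHbc] a_part le_aN.
- have [b_part _] := rem_ab; split=> //.
    exact: leq_trans (remove_strip_size rem_ab) le_aN.
  have [y /(perm_map (modn^~ p))] := beta_set_remove_strip p_gt0 a_part le_aN rem_ab.
  by rewrite /= modnDr perm_cons perm_sym.
- by split.
- have [b_part le_bN perm_ab] := IHab a_part le_aN.
  have [c_part le_cN perm_bc] := IHbc b_part le_bN.
  by split=> //; apply: perm_trans perm_ab perm_bc.
Qed.

Definition sub_closed p (B : seq nat) := {in B, forall x, p <= x -> x - p \in B}.

Lemma beta_set_sub_closed p N la : 0 < p -> is_partition la -> size la <= N ->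
  (forall i j, j < part la i -> hook la i j != p) -> sub_closed p (beta_set N la).
Proof.
move=> p_gt0 la_part le_laN no_hook x /mapP[i]; rewrite mem_iota /= => lt_iN -> le_p.
apply/negPn/negP => gap.
have : beta N la i - p \in row_gaps N la i by rewrite mem_filter gap mem_iota /=; lia.
rewrite -(perm_mem (perm_row_gaps la_part le_laN lt_iN)) => /mapP[j].
rewrite mem_iota /= => lt_ji eq_gap; move/eqP: (no_hook i j lt_ji); apply.
by have := hook_add_col_gap la_part le_laN lt_ji; rewrite -eq_gap; lia.
Qed.

Lemma sub_closed_mod p (B : seq nat) x y : 0 < p -> sub_closed p B -> x \in B ->
  y <= x -> y = x %[mod p] -> y \in B.
Proof.
move=> p_gt0 B_closed xB le_yx eq_mod.
have /dvdnP[q] : p %| x - y by rewrite -eqn_mod_dvd // eq_mod.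
elim: q x xB le_yx {eq_mod} => [|q IHq] x xB le_yx eq_q.
  by have -> : y = x by lia.
by apply: (IHq (x - p)); [apply: B_closed | |]; lia.
Qed.

Lemma hook_count_sub_closed_dvd p B h : 0 < p -> sub_closed p B -> p %| h ->
  hook_count B h = 0.
Proof.
move=> p_gt0 B_closed p_h; apply/eqP; rewrite -leqn0 leqNgt -has_count.
apply/hasPn => x xB; case: (leqP h x) => //= le_hx; rewrite negbK.
apply: (sub_closed_mod p_gt0 B_closed xB (leq_subr _ _)).
by apply/eqP; rewrite eq_sym eqn_mod_dvd ?leq_subr // subKn.
Qed.

Lemma count_mod_split p (a : pred nat) s : 0 < p ->
  count a s = \sum_(r < p) count (fun x => (x %% p == r) && a x) s.
Proof.
move=> p_gt0; elim: s => [|x s IHs] /=; first by rewrite big1.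
rewrite big_split /= -IHs; congr (_ + _).
rewrite (bigD1 (Ordinal (ltn_pmod x p_gt0))) //= eqxx big1 ?addn0 // => r ne_r.
by move: ne_r; rewrite -val_eqE /= eq_sym => /negbTE->.
Qed.

Lemma leq_count3 (T : Type) (a b c d : pred T) s :
  (forall x, a x <= b x + c x + d x) -> count a s <= count b s + count c s + count d s.
Proof. by move=> le_abcd; elim: s => //= x s IHs; have := le_abcd x; lia. Qed.

Lemma geq_count3 (T : Type) (a b c d : pred T) s :
  (forall x, b x + c x + d x <= a x) -> count b s + count c s + count d s <= count a s.
Proof. by move=> le_bcda; elim: s => //= x s IHs; have := le_bcda x; lia. Qed.

Lemma count_le_inj (T U : eqType) (a : pred T) (b : pred U) s t (f : T -> U) :
  uniq s -> {in [seq x <- s | a x] &, injective f} ->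
  (forall x, x \in s -> a x -> (f x \in t) && b (f x)) -> count a s <= count b t.
Proof.
move=> uniq_s f_inj f_sub; rewrite -!size_filter -(size_map f).
apply: uniq_leq_size; first by rewrite map_inj_in_uniq // filter_uniq.
move=> y /mapP[x]; rewrite mem_filter => /andP[ax xs] ->.
by rewrite mem_filter; case/andP: (f_sub x xs ax) => -> ->.
Qed.

Section ResidueClass.
Variables (p h r : nat).

Local Notation in_class := (fun x => x %% p == r).
Local Notation shifted := (fun y => (y + h) %% p == r).
Local Notation class_hooked B :=
  (fun x => (x %% p == r) && ((h <= x) && (x - h \notin B))).

Lemma count_class_le B : uniq B ->
  count in_class B <=
  count in_class (iota 0 h) + count shifted B + count (class_hooked B) B.
Proof.
move=> uniq_B.
apply: leq_trans (leq_count3 (b := fun x => (x %% p == r) && (x < h))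
  (c := fun x => (x %% p == r) && (h <= x) && (x - h \in B)) (d := class_hooked B) B _) _.
  by move=> x /=; case: (x %% p == r) => //=; case: (ltnP x h) => //= _; case: (x - h \in B).
rewrite leq_add2r leq_add //.
- apply: (count_le_inj (f := id)) => // x _ /andP[-> lt_xh].
  by rewrite mem_iota lt_xh.
- apply: (count_le_inj (f := subn^~ h)) => // [x y | x _ /andP[/andP[cls le_hx] xhB]].
    rewrite !mem_filter => /andP[/andP[/andP[_ le_hx] _] _].
    by case/andP=> /andP[/andP[_ le_hy] _] _; lia.
  by rewrite xhB /= subnK.
Qed.

Lemma count_class_sub_closed C : 0 < p -> uniq C -> sub_closed p C ->
  has (class_hooked C) C ->
  count in_class (iota 0 h) + count shifted C + count (class_hooked C) C <=
  count in_class C.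
Proof.
move=> p_gt0 uniq_C C_closed /hasP[x xC hooked_x].
have ex_hooked : exists x, (x \in C) && class_hooked C x by exists x; rewrite xC.
have [x0 /andP[x0C /andP[/eqP cls0 /andP[le_hx0 gap0]]] x0_min] := ex_minnP ex_hooked.
have below z : z <= x0 -> z %% p = r -> z \in C.
  by move=> le_z cls_z; apply: sub_closed_mod p_gt0 C_closed x0C le_z _; rewrite cls_z.
(* The least hooked element [x0] splits the class in [C] into three parts:
   below [h], in [h, x0) and from [x0] on, receiving injectively the class in
   [0, h), the shifted elements (via y |-> y + h) and the hooked elements. *)
apply: leq_trans (geq_count3 (a := in_class) (b := fun x => (x %% p == r) && (x < h))
  (c := fun x => (x %% p == r) && (h <= x < x0))
  (d := fun x => (x %% p == r) && (x0 <= x)) C _); last first.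
  by move=> y /=; case: (y %% p == r) => //=; case: (ltnP y h); case: (ltnP y x0); lia.
rewrite leq_add ?leq_add //.
- apply: (count_le_inj (f := id)) => [|//|z]; first exact: iota_uniq.
  by rewrite mem_iota /= => lt_zh /eqP cls_z; rewrite below ?cls_z ?eqxx ?lt_zh //; lia.
- apply: (count_le_inj (f := addn^~ h)) => // [y y' _ _|y yC /eqP cls_y]; first exact: addIn.
  have lt_yx0 : y + h < x0.
    rewrite ltnNge; apply/negP => le_x0y; move/negP: gap0; apply.
    apply: sub_closed_mod p_gt0 C_closed yC _ _; first lia.
    by apply/eqP; rewrite -(eqn_modDr h) subnK // cls_y cls0.
  by rewrite below ?cls_y ?eqxx ?leq_addl ?lt_yx0 //; lia.
- apply: (count_le_inj (f := id)) => // y yC /andP[cls_y hooked_y].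
  by rewrite yC cls_y x0_min // yC cls_y hooked_y.
Qed.

End ResidueClass.

Lemma leq_hook_count_sub_closed p h B C : 0 < p -> uniq B -> uniq C -> sub_closed p C ->
  perm_eq [seq x %% p | x <- B] [seq x %% p | x <- C] -> hook_count C h <= hook_count B h.
Proof.
move=> p_gt0 uniq_B uniq_C C_closed res_BC.
have res_count (Q : pred nat) :
    count (fun x => Q (x %% p)) B = count (fun x => Q (x %% p)) C.
  by move/permP: res_BC => /(_ Q); rewrite !count_map.
rewrite /hook_count !(count_mod_split _ _ p_gt0); apply: leq_sum => r _.
set hookedC := count _ C; case: (posnP hookedC) => [-> // | /lt0n_neq0].
rewrite -lt0n -has_count => hooked_C.
have class_eq : count (fun x => x %% p == r) B = count (fun x => x %% p == r) C.
  exact: res_count (fun z => z == r).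
have shift_eq s : count (fun y => (y + h) %% p == r) s =
                  count (fun y => (y %% p + h) %% p == r) s.
  by apply: eq_count => y; rewrite modnDml.
have shift_BC : count (fun y => (y %% p + h) %% p == r) B =
                count (fun y => (y %% p + h) %% p == r) C.
  exact: res_count (fun z => (z + h) %% p == r).
have := count_class_sub_closed p_gt0 uniq_C C_closed hooked_C.
rewrite -class_eq => /leq_trans/(_ (count_class_le p h r uniq_B)).
by rewrite !shift_eq shift_BC leq_add2l.
Qed.

Lemma dvdn_prod_count (s t : seq nat) :
  (forall x, count_mem x s <= count_mem x t) -> \prod_(x <- s) x %| \prod_(x <- t) x.
Proof.
move/count_subseqP => [u sub_ut perm_su].
have [v perm_t] := perm_to_subseq sub_ut.
by rewrite (perm_big _ perm_su) (perm_big _ perm_t) big_cat dvdn_mulr.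
Qed.

Theorem corollary7p3 (p : nat) (la core : seq nat) :
  2 <= p -> is_partition la -> is_pcore p la core ->
  Hprod core %| Hnonp p la.
Proof.
move=> le2p la_part [la_core no_strip]; have p_gt0 : 0 < p by lia.
have [core_part le_core_la res_core] :=
  remove_strips_residues p_gt0 la_core la_part (leqnn (size la)).
have core_closed : sub_closed p (beta_set (size la) core).
  apply: beta_set_sub_closed => // i j lt_ji; apply/eqP => hook_p; apply: no_strip.
  by rewrite -hook_p; apply: exists_remove_strip_hook.
rewrite /Hprod /Hnonp (prod_hook_seq xpredT le_core_la).
rewrite (prod_hook_seq (fun x => ~~ (p %| x)) (leqnn _)) -[X in _ %| X]big_filter.
apply: dvdn_prod_count => h; rewrite count_filter.
case: (posnP h) => [-> | h_gt0]; first by rewrite (count_memPn (notin0_hook_seq _ _)).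
rewrite count_hook_seq //; case: (boolP (p %| h)) => [p_h | not_p_h].
  by rewrite (hook_count_sub_closed_dvd p_gt0 core_closed p_h).
rewrite (eq_count (a2 := pred1 h)) => [|x /=]; last by case: eqP => [->|]; rewrite ?not_p_h.
rewrite count_hook_seq //; apply: leq_hook_count_sub_closed res_core => //.
all: exact: uniq_beta_set.
Qed.
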